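(* ${\sf ITL}^0_{\circ\forall}$ is complete for the class of expanding posets, and ${\sf ITL}^{\sf FS}_{\circ\forall}$ is complete for the class of persistent posets; that is, every $\mathcal L_{\circ\forall}$-formula valid on all expanding posets belongs to ${\sf ITL}^0_{\circ\forall}$, and every $\mathcal L_{\circ\forall}$-formula valid on all persistent posets belongs to ${\sf ITL}^{\sf FS}_{\circ\forall}$.
   Context: Syntax: fix a countably infinite set $\mathbb P$ of propositional variables. $\mathcal L_{\circ\forall}$ is given by $\varphi ::= \bot \mid p \mid \varphi\wedge\varphi \mid \varphi\vee\varphi \mid \varphi\to\varphi \mid \circ\varphi \mid \forall\varphi$ with $p\in\mathbb P$; $\neg\varphi:=\varphi\to\bot$, $\varphi\leftrightarrow\psi := (\varphi\to\psi)\wedge(\psi\to\varphi)$. Here $\forall$ is a universal modality. Semantics: a dynamical system is $(X,\mathcal T,f)$ with $(X,\mathcal T)$ a topological space and $f\colon X\to X$ continuous. A valuation assigns to each formula an open set with $[\![\bot]\!]=\varnothing$, $[\![\varphi\wedge\psi]\!]=[\![\varphi]\!]\cap[\![\psi]\!]$, $[\![\varphi\vee\psi]\!]=[\![\varphi]\!]\cup[\![\psi]\!]$, $[\![\varphi\to\psi]\!]=\big((X\setminus[\![\varphi]\!])\cup[\![\psi]\!]\big)^\circ$, $[\![\circ\varphi]\!]=f^{-1}[\![\varphi]\!]$, and $[\![\forall\varphi]\!]=X$ if $[\![\varphi]\!]=X$, $=\varnothing$ otherwise. A formula is valid on a class if $[\![\varphi]\!]=X$ for every system of the class and every valuation. An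 expanding poset is a dynamical system whose topology is the up-set topology of a partial order (open sets = upward closed sets); equivalently $f$ is monotone. A persistent poset is an expanding poset whose map $f$ is moreover open. Logics: ${\sf ITL}^0_{\circ\forall}$ is the least set of $\mathcal L_{\circ\forall}$-formulas containing all substitution instances of the axioms of intuitionistic propositional logic, of (N1) $\neg\circ\bot$, (N2) $\circ\varphi\wedge\circ\psi\to\circ(\varphi\wedge\psi)$, (N3) $\circ(\varphi\vee\psi)\to\circ\varphi\vee\circ\psi$, (N4) $\circ(\varphi\to\psi)\to(\circ\varphi\to\circ\psi)$, and of (UA1) $\forall\varphi\vee\neg\forall\varphi$, (UA2) $\forall(\varphi\to\psi)\to(\forall\varphi\to\forall\psi)$, (UA3) $\forall(\varphi\vee\forall\psi)\to\forall\varphi\vee\forall\psi$, (UA4) $\forall\varphi\to\varphi$, (UA5) $\forall\varphi\to\forall\forall\varphi$, (UA6) $\forall\varphi\leftrightarrow\circ\forall\varphi$, closed under modus ponens, the rule from $\varphi$ infer $\circ\varphi$, and the rule from $\varphi$ infer $\forall\varphi$. ${\sf ITL}^{\sf FS}_{\circ\forall}$ is defined likewise but additionally with the axiom (N5) $(\circ\varphi\to\circ\psi)\to\circ(\varphi\to\psi)$. *)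

Inductive form : Type :=
| Bot : form
| Var : nat -> form
| And : form -> form -> form
| Or : form -> form -> form
| Imp : form -> form -> form
| Next : form -> form
| Univ : form -> form.

Definition Neg (a : form) : form := Imp a Bot.
Definition Iff (a b : form) : form := And (Imp a b) (Imp b a).

Inductive IPC_axiom : form -> Prop :=
| ax_K  a b     : IPC_axiom (Imp a (Imp b a))
| ax_S  a b c   : IPC_axiom (Imp (Imp a (Imp b c)) (Imp (Imp a b) (Imp a c)))
| ax_andE1 a b  : IPC_axiom (Imp (And a b) a)
| ax_andE2 a b  : IPC_axiom (Imp (And a b) b)
| ax_andI a b   : IPC_axiom (Imp a (Imp b (And a b)))
| ax_orI1 a b   : IPC_axiom (Imp a (Or a b))
| ax_orI2 a b   : IPC_axiom (Imp b (Or a b))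
| ax_orE a b c  : IPC_axiom (Imp (Imp a c) (Imp (Imp b c) (Imp (Or a b) c)))
| ax_efq a      : IPC_axiom (Imp Bot a).

Inductive ITL0_axiom : form -> Prop :=
| ax_ipc a : IPC_axiom a -> ITL0_axiom a
| ax_N1 : ITL0_axiom (Neg (Next Bot))
| ax_N2 a b : ITL0_axiom (Imp (And (Next a) (Next b)) (Next (And a b)))
| ax_N3 a b : ITL0_axiom (Imp (Next (Or a b)) (Or (Next a) (Next b)))
| ax_N4 a b : ITL0_axiom (Imp (Next (Imp a b)) (Imp (Next a) (Next b)))
| ax_UA1 a : ITL0_axiom (Or (Univ a) (Neg (Univ a)))
| ax_UA2 a b : ITL0_axiom (Imp (Univ (Imp a b)) (Imp (Univ a) (Univ b)))
| ax_UA3 a b : ITL0_axiom (Imp (Univ (Or a (Univ b))) (Or (Univ a) (Univ b)))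
| ax_UA4 a : ITL0_axiom (Imp (Univ a) a)
| ax_UA5 a : ITL0_axiom (Imp (Univ a) (Univ (Univ a)))
| ax_UA6 a : ITL0_axiom (Iff (Univ a) (Next (Univ a))).

Definition N5_axiom (x : form) : Prop :=
  exists a b, x = Imp (Imp (Next a) (Next b)) (Next (Imp a b)).

Inductive ITL0 : form -> Prop :=
| ITL0_ax a : ITL0_axiom a -> ITL0 a
| ITL0_mp a b : ITL0 (Imp a b) -> ITL0 a -> ITL0 b
| ITL0_nec a : ITL0 a -> ITL0 (Next a)
| ITL0_univ a : ITL0 a -> ITL0 (Univ a).

Inductive ITLFS : form -> Prop :=
| ITLFS_ax a : ITL0_axiom a -> ITLFS a
| ITLFS_N5 a : N5_axiom a -> ITLFS a
| ITLFS_mp a b : ITLFS (Imp a b) -> ITLFS a -> ITLFS b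
| ITLFS_nec a : ITLFS a -> ITLFS (Next a)
| ITLFS_univ a : ITLFS a -> ITLFS (Univ a).

Definition is_partial_order {X : Type} (le : X -> X -> Prop) : Prop :=
  (forall x, le x x) /\
  (forall x y z, le x y -> le y z -> le x z) /\
  (forall x y, le x y -> le y x -> x = y).

(** Open sets of the up-set topology = upward closed sets. *)
Definition upset {X : Type} (le : X -> X -> Prop) (U : X -> Prop) : Prop :=
  forall x y, le x y -> U x -> U y.

Definition up_interior {X : Type} (le : X -> X -> Prop) (S : X -> Prop) : X -> Prop :=
  fun x => forall y, le x y -> S y.

Definition continuous_up {X : Type} (le : X -> X -> Prop) (f : X -> X) : Prop :=
  forall U, upset le U -> upset le (fun x => U (f x)).

Definition open_map_up {X : Type} (le : X -> X -> Prop) (f : X -> X) : Prop :=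
  forall U, upset le U -> upset le (fun y => exists x, U x /\ f x = y).

Definition expanding_poset {X : Type} (le : X -> X -> Prop) (f : X -> X) : Prop :=
  is_partial_order le /\ continuous_up le f.

Definition persistent_poset {X : Type} (le : X -> X -> Prop) (f : X -> X) : Prop :=
  expanding_poset le f /\ open_map_up le f.

Definition valuation {X : Type} (le : X -> X -> Prop) (V : nat -> X -> Prop) : Prop :=
  forall p, upset le (V p).

Fixpoint den {X : Type} (le : X -> X -> Prop) (f : X -> X) (V : nat -> X -> Prop)
  (a : form) : X -> Prop :=
  match a with
  | Bot => fun _ => False
  | Var p => V p
  | And a b => fun x => den le f V a x /\ den le f V b x
  | Or a b => fun x => den le f V a x \/ den le f V b x
  | Imp a b => up_interior le (fun x => ~ den le f V a x \/ den le f V b x)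
  | Next a => fun x => den le f V a (f x)
  | Univ a => fun _ => forall y, den le f V a y
  end.

Definition valid_at {X : Type} (le : X -> X -> Prop) (f : X -> X) (a : form) : Prop :=
  forall V, valuation le V -> forall x, den le f V a x.

Definition valid_expanding (a : form) : Prop :=
  forall (X : Type) (le : X -> X -> Prop) (f : X -> X),
    expanding_poset le f -> valid_at le f a.

Definition valid_persistent (a : form) : Prop :=
  forall (X : Type) (le : X -> X -> Prop) (f : X -> X),
    persistent_poset le f -> valid_at le f a.

From Stdlib Require Import List Arith Lia Classical FunctionalExtensionality
  PropExtensionality ProofIrrelevance Cantor.
Import ListNotations.

(* Canonical model.  Fix a prime theory G0 refuting the given formula.  The
   worlds are the prime theories that agree with G0 on all formulas [Univ a],
   ordered by inclusion, and the map sends a theory T to {a | Next a ∈ T};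
   axioms N1-N4 make this a well-defined monotone map and UA1-UA6 make the
   universal modality behave like a global one.  A Lindenbaum argument gives
   the truth lemma.  Under N5, every prime extension of {a | Next a ∈ T} is
   the image of some prime extension of T, so the map is moreover open. *)

Fixpoint formulas_upto (n : nat) : list form :=
  match n with
  | 0 => [Bot]
  | S m =>
      Bot :: map Var (seq 0 n)
      ++ flat_map (fun a => flat_map (fun b => [And a b; Or a b; Imp a b])
                                     (formulas_upto m)) (formulas_upto m)
      ++ flat_map (fun a => [Next a; Univ a]) (formulas_upto m)
  end.

Lemma formulas_upto_complete a : exists N, forall n, N <= n -> In a (formulas_upto n).
Proof.
  induction a as [| p | a [Na HNa] b [Nb HNb] | a [Na HNa] b [Nb HNb]
                  | a [Na HNa] b [Nb HNb] | a [Na HNa] | a [Na HNa]].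
  3-5: exists (S (max Na Nb)); intros [|n] Hn; [lia|]; right;
    apply in_or_app; right; apply in_or_app; left;
    apply in_flat_map; exists a; split; [apply HNa; lia|];
    apply in_flat_map; exists b; split; [apply HNb; lia|]; simpl; tauto.
  3-4: exists (S Na); intros [|n] Hn; [lia|]; right;
    apply in_or_app; right; apply in_or_app; right;
    apply in_flat_map; exists a; split; [apply HNa; lia|]; simpl; tauto.
  - exists 0. intros [|n] _; left; reflexivity.
  - exists (S p). intros [|n] Hn; [lia|]. right. apply in_or_app; left.
    apply in_map, in_seq. lia.
Qed.

Definition form_of_nat (k : nat) : form :=
  let (n, i) := of_nat k in nth i (formulas_upto n) Bot.

Lemma form_of_nat_surj a : exists k, form_of_nat k = a.
Proof.
  destruct (formulas_upto_complete a) as [N HN].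
  destruct (In_nth _ _ Bot (HN N (le_n N))) as [i [_ Hi]].
  exists (to_nat (N, i)). unfold form_of_nat. rewrite cancel_of_to. exact Hi.
Qed.

Definition extend (T : form -> Prop) (a : form) : form -> Prop :=
  fun x => T x \/ x = a.

Section Logic.

Variable L : form -> Prop.
Hypothesis L_ax : forall a, ITL0_axiom a -> L a.
Hypothesis L_mp : forall a b, L (Imp a b) -> L a -> L b.
Hypothesis L_nec : forall a, L a -> L (Next a).
Hypothesis L_univ : forall a, L a -> L (Univ a).

Inductive derives (T : form -> Prop) : form -> Prop :=
| derives_L a : L a -> derives T a
| derives_hyp a : T a -> derives T a
| derives_mp a b : derives T (Imp a b) -> derives T a -> derives T b.

Lemma derives_ipc T a : IPC_axiom a -> derives T a.
Proof. intros Ha. apply derives_L, L_ax, ax_ipc, Ha. Qed.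

Lemma derives_empty a : derives (fun _ => False) a -> L a.
Proof. induction 1 as [| a [] | a b _ IHab _ IHa]; eauto. Qed.

Lemma derives_cut T T' a :
  (forall x, T x -> derives T' x) -> derives T a -> derives T' a.
Proof.
  intros HT. induction 1; [apply derives_L | apply HT | eapply derives_mp]; eauto.
Qed.

Lemma derives_mono T T' a : (forall x, T x -> T' x) -> derives T a -> derives T' a.
Proof. intros HT. apply derives_cut. intros x Hx. apply derives_hyp, HT, Hx. Qed.

Lemma derives_imp_refl T a : derives T (Imp a a).
Proof.
  apply derives_mp with (Imp a (Imp a a)); [|apply derives_ipc, ax_K].
  apply derives_mp with (Imp a (Imp (Imp a a) a)); apply derives_ipc; constructor.
Qed.

Lemma derives_deduction T a b : derives (extend T a) b -> derives T (Imp a b).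
Proof.
  induction 1 as [c Hc | c [Hc | ->] | c d _ IHcd _ IHc].
  - apply derives_mp with c; [apply derives_ipc, ax_K | apply derives_L, Hc].
  - apply derives_mp with c; [apply derives_ipc, ax_K | apply derives_hyp, Hc].
  - apply derives_imp_refl.
  - apply derives_mp with (Imp a c); [|exact IHc].
    apply derives_mp with (Imp a (Imp c d)); [apply derives_ipc, ax_S | exact IHcd].
Qed.

Lemma derives_assume T a b : derives T (Imp a b) -> derives (extend T a) b.
Proof.
  intros Hab. apply derives_mp with a; [|apply derives_hyp; right; reflexivity].
  apply (derives_mono T); [left; assumption | exact Hab].
Qed.

Lemma derives_extend_cut T a a' b :
  derives (extend T a') a -> derives (extend T a) b -> derives (extend T a') b.
Proof.
  intros Ha. apply derives_cut. intros x [Hx | ->]; [apply derives_hyp; left|]; assumption.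
Qed.

Lemma derives_imp_trans T a b c :
  derives T (Imp a b) -> derives T (Imp b c) -> derives T (Imp a c).
Proof.
  intros Hab Hbc. apply derives_deduction.
  apply derives_mp with b; [apply (derives_mono T) | apply derives_assume]; auto.
  intros x Hx; left; exact Hx.
Qed.

Lemma derives_orE T a b c :
  derives T (Imp a c) -> derives T (Imp b c) -> derives T (Or a b) -> derives T c.
Proof.
  intros Hac Hbc Hab. apply derives_mp with (Or a b); [|exact Hab].
  apply derives_mp with (Imp b c); [|exact Hbc].
  apply derives_mp with (Imp a c); [apply derives_ipc, ax_orE | exact Hac].
Qed.

Lemma L_or_idem a : L (Imp (Or a a) a).
Proof.
  apply derives_empty, derives_deduction.
  apply derives_orE with a a; [apply derives_imp_refl | apply derives_imp_refl|].
  apply derives_hyp; right; reflexivity.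
Qed.

Lemma L_next_mono a b : L (Imp a b) -> L (Imp (Next a) (Next b)).
Proof.
  intros Hab. apply L_mp with (Next (Imp a b)); [apply L_ax, ax_N4 | apply L_nec, Hab].
Qed.

Lemma derives_modal (M : form -> form) T a :
  (forall b, L b -> L (M b)) ->
  (forall b c, L (Imp (M (Imp b c)) (Imp (M b) (M c)))) ->
  derives (fun b => T (M b)) a -> derives T (M a).
Proof.
  intros M_nec M_K. induction 1 as [b Hb | b Hb | b c _ IHbc _ IHb].
  - apply derives_L, M_nec, Hb.
  - apply derives_hyp, Hb.
  - apply derives_mp with (M b); [|exact IHb].
    apply derives_mp with (M (Imp b c)); [apply derives_L, M_K | exact IHbc].
Qed.

Record prime_theory (T : form -> Prop) : Prop := {
  prime_closed : forall a, derives T a -> T a;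
  prime_consistent : ~ T Bot;
  prime_or_split : forall a b, T (Or a b) -> T a \/ T b }.

Section PrimeTheory.

Variable T : form -> Prop.
Hypothesis T_prime : prime_theory T.

Lemma prime_L a : L a -> T a.
Proof. intros Ha. apply (prime_closed T T_prime), derives_L, Ha. Qed.

Lemma prime_mp a b : T (Imp a b) -> T a -> T b.
Proof.
  intros Hab Ha. apply (prime_closed T T_prime).
  apply derives_mp with a; apply derives_hyp; assumption.
Qed.

Lemma prime_and a b : T (And a b) <-> T a /\ T b.
Proof.
  split.
  - intros Hab. split; eapply prime_mp; eauto; apply prime_L, L_ax, ax_ipc; constructor.
  - intros [Ha Hb]. apply prime_mp with b; [|exact Hb].
    apply prime_mp with a; [apply prime_L, L_ax, ax_ipc, ax_andI | exact Ha].
Qed.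

Lemma prime_or a b : T (Or a b) <-> T a \/ T b.
Proof.
  split; [apply (prime_or_split T T_prime)|].
  intros [H | H]; eapply prime_mp; eauto; apply prime_L, L_ax, ax_ipc; constructor.
Qed.

End PrimeTheory.

Section Lindenbaum.

Variables Gamma Pi : form -> Prop.
Hypothesis Pi_or : forall p q, Pi p -> Pi q -> exists r, Pi r /\ L (Imp (Or p q) r).
Hypothesis Pi_inhabited : exists p, Pi p.
Hypothesis Gamma_avoids : forall p, Pi p -> ~ derives Gamma p.

Definition avoids (T : form -> Prop) : Prop := forall p, Pi p -> ~ derives T p.

Fixpoint stage (n : nat) : form -> Prop :=
  match n with
  | 0 => Gamma
  | S m => fun a => stage m a \/
             (a = form_of_nat m /\ avoids (extend (stage m) (form_of_nat m)))
  end.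

Definition limit (a : form) : Prop := exists n, stage n a.

Lemma stage_mono n m : n <= m -> forall a, stage n a -> stage m a.
Proof. induction 1; simpl; auto. Qed.

Lemma stage_avoids n : avoids (stage n).
Proof.
  induction n as [|n IHn]; [exact Gamma_avoids|]. intros p Hp Hd.
  destruct (classic (avoids (extend (stage n) (form_of_nat n)))) as [C | C].
  - apply (C p Hp). revert Hd. apply derives_mono. intros y [Hy | [-> _]].
    + left; exact Hy.
    + right; reflexivity.
  - apply (IHn p Hp). revert Hd. apply derives_mono. intros y [Hy | [_ Hy]]; tauto.
Qed.

Lemma limit_compact a : derives limit a -> exists n, derives (stage n) a.
Proof.
  induction 1 as [a Ha | a [n Hn] | a b _ [n Hn] _ [m Hm]].
  - exists 0. apply derives_L, Ha.
  - exists n. apply derives_hyp, Hn.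
  - exists (max n m). apply derives_mp with a.
    + revert Hn. apply derives_mono, stage_mono. lia.
    + revert Hm. apply derives_mono, stage_mono. lia.
Qed.

Lemma limit_avoids : avoids limit.
Proof.
  intros p Hp Hd. destruct (limit_compact p Hd) as [n Hn]. exact (stage_avoids n p Hp Hn).
Qed.

Lemma limit_step n : avoids (extend (stage n) (form_of_nat n)) -> limit (form_of_nat n).
Proof. intros Hn. exists (S n). right. split; [reflexivity | exact Hn]. Qed.

Lemma stage_limit n a : stage n a -> limit a.
Proof. intros Ha. exists n. exact Ha. Qed.

Lemma limit_closed a : derives limit a -> limit a.
Proof.
  intros Ha. destruct (form_of_nat_surj a) as [n <-]. apply limit_step.
  intros p Hp Hd. apply (limit_avoids p Hp). revert Hd. apply derives_cut.
  intros x [Hx | ->]; [apply derives_hyp, (stage_limit n), Hx | exact Ha].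
Qed.

Lemma limit_refutes a : ~ limit a -> exists p, Pi p /\ derives limit (Imp a p).
Proof.
  intros Ha. destruct (form_of_nat_surj a) as [n <-].
  assert (Hn : ~ avoids (extend (stage n) (form_of_nat n)))
    by (intro Hn; apply Ha, limit_step, Hn).
  apply NNPP. intros Hnp. apply Hn. intros p Hp Hd. apply Hnp. exists p. split; [exact Hp|].
  apply derives_deduction. revert Hd. apply derives_mono.
  intros x [Hx | ->]; [left; apply (stage_limit n), Hx | right; reflexivity].
Qed.

Lemma limit_or a b : limit (Or a b) -> limit a \/ limit b.
Proof.
  intros Hab. apply NNPP. intros Hn. apply not_or_and in Hn as [Ha Hb].
  destruct (limit_refutes a Ha) as [p [Hp Hap]], (limit_refutes b Hb) as [q [Hq Hbq]].
  destruct (Pi_or p q Hp Hq) as [r [Hr Hpqr]].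
  apply (limit_avoids r Hr). apply derives_mp with (Or p q); [apply derives_L, Hpqr|].
  apply derives_orE with a b; [| | apply derives_hyp, Hab].
  - apply derives_imp_trans with p; [exact Hap | apply derives_ipc, ax_orI1].
  - apply derives_imp_trans with q; [exact Hbq | apply derives_ipc, ax_orI2].
Qed.

Theorem lindenbaum :
  exists D, prime_theory D /\ (forall a, Gamma a -> D a) /\ (forall p, Pi p -> ~ D p).
Proof.
  exists limit. split; [split|split].
  - exact limit_closed.
  - intros HBot. destruct Pi_inhabited as [p Hp]. apply (limit_avoids p Hp).
    apply derives_mp with Bot; [apply derives_ipc, ax_efq | apply derives_hyp, HBot].
  - exact limit_or.
  - exact (stage_limit 0).
  - intros p Hp HD. apply (limit_avoids p Hp), derives_hyp, HD.
Qed.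

End Lindenbaum.

Corollary lindenbaum_single Gamma b :
  ~ derives Gamma b -> exists D, prime_theory D /\ (forall a, Gamma a -> D a) /\ ~ D b.
Proof.
  intros Hb. destruct (lindenbaum Gamma (fun p => p = b)) as [D [HD [HGD HDb]]].
  - intros p q -> ->. exists b. split; [reflexivity | apply L_or_idem].
  - exists b. reflexivity.
  - intros p ->. exact Hb.
  - exists D. split; [exact HD | split; [exact HGD | exact (HDb b eq_refl)]].
Qed.

Lemma next_prime T : prime_theory T -> prime_theory (fun a => T (Next a)).
Proof.
  intros HT. split.
  - intros a Ha. apply (prime_closed T HT), (derives_modal Next); auto.
    intros b c. apply L_ax, ax_N4.
  - intros HBot. apply (prime_consistent T HT).
    apply (prime_mp T HT (Next Bot)); [apply (prime_L T HT), L_ax, ax_N1 | exact HBot].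
  - intros a b Hab. apply (prime_or T HT).
    apply (prime_mp T HT (Next (Or a b))); [apply (prime_L T HT), L_ax, ax_N3 | exact Hab].
Qed.

(* As [D'] is closed under [And], the hypotheses [Next d1], [Next d2] used by
   a derivation can be merged into [Next (And d1 d2)]. *)
Lemma derives_next_split T D' a :
  prime_theory D' ->
  derives (fun c => T c \/ exists d, D' d /\ c = Next d) a ->
  exists d, D' d /\ derives (extend T (Next d)) a.
Proof.
  intros HD'. assert (Htop : D' (Neg Bot)).
  { apply (prime_L D' HD'), derives_empty, derives_imp_refl. }
  induction 1 as [a Ha | a [Ha | [d [Hd ->]]] | a b _ [d1 [Hd1 H1]] _ [d2 [Hd2 H2]]].
  - exists (Neg Bot). split; [exact Htop | apply derives_L, Ha].
  - exists (Neg Bot). split; [exact Htop | apply derives_hyp; left; exact Ha].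
  - exists d. split; [exact Hd | apply derives_hyp; right; reflexivity].
  - exists (And d1 d2). split; [apply (prime_and D' HD'); auto|].
    assert (Hproj : forall d, L (Imp (And d1 d2) d) ->
                     derives (extend T (Next (And d1 d2))) (Next d)).
    { intros d Hd. apply derives_mp with (Next (And d1 d2));
        [apply derives_L, L_next_mono, Hd | apply derives_hyp; right; reflexivity]. }
    apply derives_mp with a.
    + apply derives_extend_cut with (a := Next d1); [|exact H1].
      apply Hproj, L_ax, ax_ipc, ax_andE1.
    + apply derives_extend_cut with (a := Next d2); [|exact H2].
      apply Hproj, L_ax, ax_ipc, ax_andE2.
Qed.

Lemma next_preimage_extension T D' :
  (forall a, N5_axiom a -> L a) ->
  prime_theory T -> prime_theory D' -> (forall a, T (Next a) -> D' a) ->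
  exists D, prime_theory D /\ (forall a, T a -> D a) /\ (forall a, D (Next a) <-> D' a).
Proof.
  intros L_N5 HT HD' HTD'.
  destruct (lindenbaum (fun c => T c \/ exists d, D' d /\ c = Next d)
                       (fun p => exists s, ~ D' s /\ p = Next s)) as [D [HD [HSD HPD]]].
  - intros p q [s1 [Hs1 ->]] [s2 [Hs2 ->]]. exists (Next (Or s1 s2)). split.
    + exists (Or s1 s2). split; [|reflexivity].
      intros Hs. apply (prime_or D' HD') in Hs. tauto.
    + apply derives_empty, derives_deduction.
      apply derives_orE with (Next s1) (Next s2); [| | apply derives_hyp; right; reflexivity];
        apply derives_L, L_next_mono, L_ax, ax_ipc; constructor.
  - exists (Next Bot), Bot. split; [exact (prime_consistent D' HD') | reflexivity].
  - intros p [s [Hs ->]] Hd. destruct (derives_next_split T D' _ HD' Hd) as [d [Hd' Hds]].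
    (* By N5, [Next d -> Next s] in [T] gives [Next (d -> s)] in [T]. *)
    apply Hs, (prime_mp D' HD' d); [apply HTD' | exact Hd'].
    apply (prime_mp T HT (Imp (Next d) (Next s))).
    + apply (prime_L T HT), L_N5. exists d, s. reflexivity.
    + apply (prime_closed T HT), derives_deduction, Hds.
  - exists D. split; [exact HD | split].
    + intros a Ha. apply HSD. left. exact Ha.
    + intros a. split.
      * intros Ha. apply NNPP. intros Hn.
        exact (HPD (Next a) (ex_intro _ a (conj Hn eq_refl)) Ha).
      * intros Ha. apply HSD. right. exists a. split; [exact Ha | reflexivity].
Qed.

Section Canonical.

Variable G0 : form -> Prop.
Hypothesis G0_prime : prime_theory G0.

Record world : Type := World {
  wtheory :> form -> Prop;
  wtheory_prime : prime_theory wtheory;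
  wtheory_univ : forall a, wtheory (Univ a) <-> G0 (Univ a) }.

Definition world_le (x y : world) : Prop := forall a, x a -> y a.

Lemma world_ext (x y : world) : (forall a, x a <-> y a) -> x = y.
Proof.
  destruct x as [T HT HTu], y as [T' HT' HTu']. simpl. intros H.
  assert (T = T') as <-.
  { extensionality a. apply propositional_extensionality, H. }
  f_equal; apply proof_irrelevance.
Qed.

Lemma world_up_univ (x : world) T :
  prime_theory T -> (forall a, x a -> T a) -> forall a, T (Univ a) <-> G0 (Univ a).
Proof.
  intros HT HxT c. split.
  - intros Hc. assert (Hx : x (Or (Univ c) (Neg (Univ c)))).
    { apply (prime_L x (wtheory_prime x)), L_ax, ax_UA1. }
    apply (prime_or x (wtheory_prime x)) in Hx as [Hx | Hx]; [apply (wtheory_univ x), Hx|].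
    exfalso. apply (prime_consistent T HT), (prime_mp T HT (Univ c)); auto.
  - intros Hc. apply HxT, (wtheory_univ x), Hc.
Qed.

(* UA3 splits [Univ (Neg (Univ c) \/ Univ c)], which holds by UA1. *)
Lemma univ_theory_agrees D :
  prime_theory D -> (forall a, G0 (Univ a) -> D a) -> forall a, D (Univ a) <-> G0 (Univ a).
Proof.
  intros HD HGD c. split.
  - intros Hc. assert (Hsplit : G0 (Or (Univ (Neg (Univ c))) (Univ c))).
    { apply (prime_mp G0 G0_prime (Univ (Or (Neg (Univ c)) (Univ c))));
        apply (prime_L G0 G0_prime); [apply L_ax, ax_UA3|].
      apply L_univ, derives_empty.
      apply derives_orE with (Univ c) (Neg (Univ c)); [| | apply derives_L, L_ax, ax_UA1];
        apply derives_ipc; constructor. }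
    apply (prime_or G0 G0_prime) in Hsplit as [Hn | Hc']; [|exact Hc'].
    exfalso. apply (prime_consistent D HD), (prime_mp D HD (Univ c)); auto.
  - intros Hc. apply HGD. apply (prime_mp G0 G0_prime (Univ c)); [|exact Hc].
    apply (prime_L G0 G0_prime), L_ax, ax_UA5.
Qed.

Lemma next_univ (x : world) a : x (Next (Univ a)) <-> G0 (Univ a).
Proof.
  rewrite <- (wtheory_univ x).
  pose proof (prime_L x (wtheory_prime x) _ (L_ax _ (ax_UA6 a))) as H.
  apply (prime_and x (wtheory_prime x)) in H as [H1 H2].
  split; apply (prime_mp x (wtheory_prime x)); assumption.
Qed.

Definition world_next (x : world) : world :=
  World (fun a => x (Next a)) (next_prime x (wtheory_prime x)) (next_univ x).

Definition world_val (p : nat) (x : world) : Prop := x (Var p).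

Lemma world_imp_witness (x : world) a b :
  ~ x (Imp a b) -> exists y, world_le x y /\ y a /\ ~ y b.
Proof.
  intros Hab. destruct (lindenbaum_single (extend x a) b) as [D [HD [HxD HDb]]].
  { intros Hd. apply Hab, (prime_closed x (wtheory_prime x)), derives_deduction, Hd. }
  assert (HxD' : forall c, x c -> D c) by (intros c Hc; apply HxD; left; exact Hc).
  exists (World D HD (world_up_univ x D HD HxD')).
  split; [exact HxD' | split; [apply HxD; right; reflexivity | exact HDb]].
Qed.

Lemma world_univ_witness a : ~ G0 (Univ a) -> exists y : world, ~ y a.
Proof.
  intros Ha. destruct (lindenbaum_single (fun c => G0 (Univ c)) a) as [D [HD [HGD HDa]]].
  { intros Hd. apply Ha, (prime_closed G0 G0_prime), (derives_modal Univ); auto.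
    intros b c. apply L_ax, ax_UA2. }
  exists (World D HD (univ_theory_agrees D HD HGD)). exact HDa.
Qed.

Lemma truth_lemma a (x : world) : den world_le world_next world_val a x <-> x a.
Proof.
  revert x. induction a as [| p | a IHa b IHb | a IHa b IHb | a IHa b IHb | a IHa | a IHa];
    intros x; cbn [den].
  - split; [tauto | apply prime_consistent, wtheory_prime].
  - reflexivity.
  - rewrite IHa, IHb. symmetry. apply prime_and, wtheory_prime.
  - rewrite IHa, IHb. symmetry. apply prime_or, wtheory_prime.
  - unfold up_interior. split.
    + intros H. apply NNPP. intros Hn.
      destruct (world_imp_witness x a b Hn) as [y [Hxy [Ha Hb]]].
      destruct (H y Hxy) as [H' | H']; [apply H', IHa, Ha | apply Hb, IHb, H'].
    + intros H y Hxy. destruct (classic (y a)) as [Ha | Ha].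
      * right. apply IHb, (prime_mp y (wtheory_prime y) a); [apply Hxy, H | exact Ha].
      * left. rewrite IHa. exact Ha.
  - exact (IHa (world_next x)).
  - split.
    + intros H. apply (wtheory_univ x). apply NNPP. intros Hn.
      destruct (world_univ_witness a Hn) as [y Hy]. apply Hy, IHa, H.
    + intros H y. apply IHa, (prime_mp y (wtheory_prime y) (Univ a)).
      * apply (prime_L y (wtheory_prime y)), L_ax, ax_UA4.
      * apply (wtheory_univ y), (wtheory_univ x), H.
Qed.

Lemma canonical_refutes a : ~ G0 a -> ~ valid_at world_le world_next a.
Proof.
  intros Ha Hv. apply Ha.
  apply (truth_lemma a (World G0 G0_prime (fun b => iff_refl _))).
  apply Hv. intros p x y Hxy Hx. apply Hxy, Hx.
Qed.

Lemma canonical_expanding : expanding_poset world_le world_next.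
Proof.
  split; [split; [|split]|].
  - intros x a Ha. exact Ha.
  - intros x y z Hxy Hyz a Ha. apply Hyz, Hxy, Ha.
  - intros x y Hxy Hyx. apply world_ext. split; [apply Hxy | apply Hyx].
  - intros U HU x y Hxy Hx. apply (HU (world_next x)); [|exact Hx]. intros a. apply Hxy.
Qed.

Lemma canonical_open :
  (forall a, N5_axiom a -> L a) -> open_map_up world_le world_next.
Proof.
  intros L_N5 U HU z z' Hzz' [x [Hx <-]].
  destruct (next_preimage_extension x z' L_N5 (wtheory_prime x) (wtheory_prime z') Hzz')
    as [D [HD [HxD HDz']]].
  exists (World D HD (world_up_univ x D HD HxD)). split.
  - apply (HU x); [exact HxD | exact Hx].
  - apply world_ext. exact HDz'.
Qed.

End Canonical.

Lemma prime_refuting a : ~ L a -> exists G0, prime_theory G0 /\ ~ G0 a.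
Proof.
  intros Ha. destruct (lindenbaum_single (fun _ => False) a) as [D [HD [_ HDa]]].
  - intros Hd. apply Ha, derives_empty, Hd.
  - exists D. split; assumption.
Qed.

Theorem completeness_expanding a : valid_expanding a -> L a.
Proof.
  intros Hv. apply NNPP. intros Ha. destruct (prime_refuting a Ha) as [G0 [HG0 HG0a]].
  apply (canonical_refutes G0 HG0 a HG0a), Hv, canonical_expanding.
Qed.

Theorem completeness_persistent :
  (forall a, N5_axiom a -> L a) -> forall a, valid_persistent a -> L a.
Proof.
  intros L_N5 a Hv. apply NNPP. intros Ha. destruct (prime_refuting a Ha) as [G0 [HG0 HG0a]].
  apply (canonical_refutes G0 HG0 a HG0a), Hv.
  split; [apply canonical_expanding | apply canonical_open, L_N5].
Qed.

End Logic.

Theorem theorem9p4 :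
  (forall a : form, valid_expanding a -> ITL0 a) /\
  (forall a : form, valid_persistent a -> ITLFS a).
Proof.
  split.
  - apply completeness_expanding;
      [exact ITL0_ax | exact ITL0_mp | exact ITL0_nec | exact ITL0_univ].
  - apply completeness_persistent;
      [exact ITLFS_ax | exact ITLFS_mp | exact ITLFS_nec | exact ITLFS_univ | exact ITLFS_N5].
Qed.
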